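(* Let $P_0,P_1,P_2\in\mathbb H$ be distinct, let $\alpha:=-1+\langle P_0,P_1\rangle+\langle P_1,P_2\rangle+\langle P_2,P_0\rangle$, $\chi:=\langle P_0\tilde\times P_1,P_2\rangle$, $d_0:=\sqrt{1-2\langle P_1,P_2\rangle}$, $d_1:=\sqrt{1-2\langle P_2,P_0\rangle}$, $d_2:=\sqrt{1-2\langle P_0,P_1\rangle}$ (indices in $\mathbb Z/3\mathbb Z$), and $\gamma:=3(d_0^2+1)(d_1^2+1)(d_2^2+1)$. Then $$(2\chi)^2\le\frac13\sum_{i=0}^2 d_i^2(d_{i+1}^2-3)(d_{i+2}^2-3)\qquad\text{and}\qquad -24\alpha\chi\le\gamma.$$
   Context: $\langle v,w\rangle=-v_1w_1+v_2w_2+v_3w_3$ on $\mathbb R^3$; $\mathbb H=\{P\in\mathbb R^3:\langle P,P\rangle=-1,\ P_1\ge1\}$; $v\tilde\times w:=J(v\times w)$ with $J=\mathrm{diag}(-1,1,1)$ and $\times$ the Euclidean cross product. *)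

From HB Require Import structures.
From mathcomp Require Import all_boot all_order all_algebra.
Set Implicit Arguments. Unset Strict Implicit. Unset Printing Implicit Defensive.
Import Order.TTheory GRing.Theory Num.Theory.
Local Open Scope ring_scope.

Section Minkowski.
Variable R : rcfType.

(* coordinates v_1, v_2, v_3 of the paper are v 0 c0, v 0 c1, v 0 c2 *)
Definition c0 : 'I_3 := @Ordinal 3 0 isT.
Definition c1 : 'I_3 := @Ordinal 3 1 isT.
Definition c2 : 'I_3 := @Ordinal 3 2 isT.

Definition mink (v w : 'rV[R]_3) : R :=
  - (v 0 c0 * w 0 c0) + v 0 c1 * w 0 c1 + v 0 c2 * w 0 c2.

Definition in_H (P : 'rV[R]_3) : Prop := mink P P = -1 /\ 1 <= P 0 c0.

Definition ecross (v w : 'rV[R]_3) : 'rV[R]_3 :=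
  \row_(i < 3) (match val i with
               | 0 => v 0 c1 * w 0 c2 - v 0 c2 * w 0 c1
               | 1 => v 0 c2 * w 0 c0 - v 0 c0 * w 0 c2
               | _ => v 0 c0 * w 0 c1 - v 0 c1 * w 0 c0
               end).

Definition Jmx : 'M[R]_3 := diag_mx (\row_(i < 3) (if i == c0 then -1 else 1)).

(* Lorentzian cross product v ~x w := J (v x w) (row-vector convention) *)
Definition lcross (v w : 'rV[R]_3) : 'rV[R]_3 := ecross v w *m Jmx.

End Minkowski.

From HB Require Import structures.
From mathcomp Require Import all_boot all_order all_algebra.
From mathcomp Require Import ring lra.
Import Order.TTheory GRing.Theory Num.Theory.
Set Implicit Arguments.
Unset Strict Implicit.
Unset Printing Implicit Defensive.
Local Open Scope ring_scope.

(* The Lorentzian triple product chi is a determinant, so chi^2 is minus the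
   Gram determinant of P0, P1, P2.  On the hyperboloid this expresses chi^2
   as 1 - a^2 - b^2 - c^2 - 2abc in the three pairwise products a, b, c,
   which are all <= -1 by the reverse Cauchy-Schwarz inequality.  Both
   inequalities are then polynomial facts in a, b, c, x with
   x^2 = 1 - a^2 - b^2 - c^2 - 2abc: the first differs from its right-hand
   side by 2((a-b)^2 + (b-c)^2 + (c-a)^2), and for the second the squares of
   both sides differ by a perfect square. *)

Lemma mink_le_Nr1 (R : rcfType) (P Q : 'rV[R]_3) :
  in_H P -> in_H Q -> mink P Q <= -1.
Proof.
rewrite /in_H /mink => -[hP gP] [hQ gQ].
set p0 := P 0 c0 in hP gP *; set p1 := P 0 c1 in hP *; set p2 := P 0 c2 in hP *.
set q0 := Q 0 c0 in hQ gQ *; set q1 := Q 0 c1 in hQ *; set q2 := Q 0 c2 in hQ *.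
have lagrange : (p0 * q0 - 1) ^+ 2 - (p1 * q1 + p2 * q2) ^+ 2
                = (p1 * q2 - p2 * q1) ^+ 2 + (p0 - q0) ^+ 2.
  have P_eq0 : p0 * p0 - 1 - p1 * p1 - p2 * p2 = 0 by lra.
  have Q_eq0 : q0 * q0 - 1 - q1 * q1 - q2 * q2 = 0 by lra.
  apply/eqP; rewrite -subr_eq0; apply/eqP.
  transitivity ((p0 * p0 - 1 - p1 * p1 - p2 * p2) * (q0 * q0 - 1)
     + (p1 * p1 + p2 * p2) * (q0 * q0 - 1 - q1 * q1 - q2 * q2)); first ring.
  by rewrite P_eq0 Q_eq0; ring.
have space_le : (p1 * q1 + p2 * q2) ^+ 2 <= (p0 * q0 - 1) ^+ 2.
  by rewrite -subr_ge0 lagrange addr_ge0 ?sqr_ge0.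
have time_ge0 : 0 <= p0 * q0 - 1 by nra.
nra.
Qed.

Lemma lcrossE (R : rcfType) (v w : 'rV[R]_3) :
  [/\ lcross v w 0 c0 = - (v 0 c1 * w 0 c2 - v 0 c2 * w 0 c1),
      lcross v w 0 c1 = v 0 c2 * w 0 c0 - v 0 c0 * w 0 c2 &
      lcross v w 0 c2 = v 0 c0 * w 0 c1 - v 0 c1 * w 0 c0].
Proof. by rewrite /lcross /Jmx mul_mx_diag !mxE /= !mulrN1 !mulr1. Qed.

Lemma sqr_mink_lcross (R : rcfType) (v w u : 'rV[R]_3) :
  mink (lcross v w) u ^+ 2 =
    mink v v * mink w u ^+ 2 + mink w w * mink u v ^+ 2
    + mink u u * mink v w ^+ 2 - mink v v * mink w w * mink u u
    - 2 * mink v w * mink w u * mink u v.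
Proof. by rewrite /mink; case: (lcrossE v w) => -> -> ->; ring. Qed.

Section GramInequalities.
Variables (R : realFieldType) (a b c x : R).
Hypothesis gram : x ^+ 2 = 1 - a ^+ 2 - b ^+ 2 - c ^+ 2 - 2 * a * b * c.

Lemma sqr_gram_le_cyclic :
  (2 * x) ^+ 2 <= 3^-1 * ((1 - 2 * a) * (1 - 2 * b - 3) * (1 - 2 * c - 3)
                        + (1 - 2 * b) * (1 - 2 * c - 3) * (1 - 2 * a - 3)
                        + (1 - 2 * c) * (1 - 2 * a - 3) * (1 - 2 * b - 3)).
Proof.
rewrite exprMn gram -subr_ge0.
have -> : 3^-1 * ((1 - 2 * a) * (1 - 2 * b - 3) * (1 - 2 * c - 3)
                + (1 - 2 * b) * (1 - 2 * c - 3) * (1 - 2 * a - 3)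
                + (1 - 2 * c) * (1 - 2 * a - 3) * (1 - 2 * b - 3))
          - 2 ^+ 2 * (1 - a ^+ 2 - b ^+ 2 - c ^+ 2 - 2 * a * b * c)
          = 2 * ((a - b) ^+ 2 + (b - c) ^+ 2 + (c - a) ^+ 2) by field.
by rewrite mulr_ge0 // !addr_ge0 ?sqr_ge0.
Qed.

Lemma gram_mul_le : a <= 1 -> b <= 1 -> c <= 1 ->
  (1 - a - b - c) * x <= (1 - a) * (1 - b) * (1 - c).
Proof.
move=> a_le1 b_le1 c_le1.
set X := (1 - a - b - c) * x; set Y := (1 - a) * (1 - b) * (1 - c).
have Y_ge0 : 0 <= Y by rewrite !mulr_ge0 ?subr_ge0.
have sqr_le : X ^+ 2 <= Y ^+ 2.
  rewrite -subr_ge0.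
  have -> : Y ^+ 2 - X ^+ 2 = (a + b + c - a ^+ 2 - b ^+ 2 - c ^+ 2
                               - a * b - b * c - c * a - a * b * c) ^+ 2.
    by rewrite /X /Y !exprMn gram; ring.
  exact: sqr_ge0.
nra.
Qed.

End GramInequalities.

Theorem lemma3p4 (R : rcfType) (P0 P1 P2 : 'rV[R]_3) :
  in_H P0 -> in_H P1 -> in_H P2 ->
  P0 != P1 -> P1 != P2 -> P2 != P0 ->
  let alpha := -1 + mink P0 P1 + mink P1 P2 + mink P2 P0 in
  let chi := mink (lcross P0 P1) P2 in
  let d0 := Num.sqrt (1 - 2 * mink P1 P2) in
  let d1 := Num.sqrt (1 - 2 * mink P2 P0) in
  let d2 := Num.sqrt (1 - 2 * mink P0 P1) in
  let gamma := 3 * (d0 ^+ 2 + 1) * (d1 ^+ 2 + 1) * (d2 ^+ 2 + 1) in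
  (2 * chi) ^+ 2 <= 3^-1 * (d0 ^+ 2 * (d1 ^+ 2 - 3) * (d2 ^+ 2 - 3)
                          + d1 ^+ 2 * (d2 ^+ 2 - 3) * (d0 ^+ 2 - 3)
                          + d2 ^+ 2 * (d0 ^+ 2 - 3) * (d1 ^+ 2 - 3))
  /\ - (24 * alpha * chi) <= gamma.
Proof.
move=> H0 H1 H2 _ _ _ alpha chi d0 d1 d2 gamma.
have a_le := mink_le_Nr1 H1 H2; have b_le := mink_le_Nr1 H2 H0.
have c_le := mink_le_Nr1 H0 H1.
have sqr_sqrt_1B2 (t : R) : t <= -1 -> Num.sqrt (1 - 2 * t) ^+ 2 = 1 - 2 * t.
  by move=> t_le; rewrite sqr_sqrtr //; lra.
rewrite /gamma /d0 /d1 /d2 !sqr_sqrt_1B2 // /alpha.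
have gram : chi ^+ 2 = 1 - mink P1 P2 ^+ 2 - mink P2 P0 ^+ 2 - mink P0 P1 ^+ 2
                       - 2 * mink P1 P2 * mink P2 P0 * mink P0 P1.
  by rewrite sqr_mink_lcross (proj1 H0) (proj1 H1) (proj1 H2); ring.
split; first exact: sqr_gram_le_cyclic.
have le1 (t : R) : t <= -1 -> t <= 1 by move=> ?; lra.
have := gram_mul_le gram (le1 _ a_le) (le1 _ b_le) (le1 _ c_le).
lra.
Qed.
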